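(* For every integer $d\ge3$ and all $p_1,\dots,p_d\in(0,1)$, the first rencontre-time $J^d$ (see context) satisfies $E(J^d)=\infty$.
   Context: Let $d\ge2$ be an integer and $p_1,\dots,p_d\in(0,1)$. Let $\{X^j_k\}_{k\ge1}$, $j=1,\dots,d$, be independent sequences, the $j$-th consisting of i.i.d. Bernoulli random variables with success parameter $p_j$ (all $X^j_k$ mutually independent). Set $S^j(n)=\sum_{i=1}^n X^j_i$. The first rencontre-time is $J^d=\inf\{n\ge1: S^1(n)=S^2(n)=\dots=S^d(n)\}$ with $\inf\emptyset=\infty$. *)

From HB Require Import structures.
From mathcomp Require Import all_boot all_order all_algebra.
From mathcomp Require Import all_classical all_reals all_analysis.
Set Implicit Arguments. Unset Strict Implicit. Unset Printing Implicit Defensive.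
Import Order.TTheory GRing.Theory Num.Theory.
Local Open Scope classical_set_scope.
Local Open Scope ring_scope.

(* For boolean variables this is equivalent to mutual independence of the
   generated sigma-algebras. *)
Definition mutually_independent_bool (d0 : measure_display) (T : measurableType d0)
  (R : realType) (P : probability T R) (I : eqType) (Y : I -> T -> bool) : Prop :=
  forall (F : seq I) (b : I -> bool), uniq F ->
    P (\bigcap_(i in [set i | i \in F]) [set t | Y i t = b i]) =
    (\prod_(i <- F) P [set t | Y i t = b i])%E.

(* S^j(n) = X^j_1 + ... + X^j_n ; here the sequence is indexed from 0,
   i.e. X j 0 plays the role of X^j_1. *)
Definition partial_sum (d : nat) (T : Type) (X : 'I_d -> nat -> T -> bool)
  (j : 'I_d) (n : nat) (t : T) : nat :=
  (\sum_(i < n) (X j i t : nat))%N.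

(* First rencontre time J^d = inf {n >= 1 : S^1(n) = ... = S^d(n)},
   valued in the extended reals, with inf emptyset = +oo. *)
Definition rencontre_time (R : realType) (d : nat) (T : Type)
  (X : 'I_d -> nat -> T -> bool) (t : T) : \bar R :=
  ereal_inf [set (n%:R)%:E | n in
    [set n : nat | (0 < n)%N /\ forall j j' : 'I_d,
        partial_sum X j n t = partial_sum X j' n t]].

From HB Require Import structures.
From mathcomp Require Import all_boot all_order all_algebra.
From mathcomp Require Import all_classical all_reals all_analysis.
From mathcomp Require Import measurable_realfun.
From mathcomp Require Import ring lra zify.
Import Order.TTheory GRing.Theory Num.Theory.
Local Open Scope classical_set_scope.
Local Open Scope ring_scope.

Set Implicit Arguments. Unset Strict Implicit. Unset Printing Implicit Defensive.

(* Since J^d >= J^2, the first meeting time of the first two sequences, it suffices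
   to look at the walk D_n = S^1(n) - S^2(n), whose steps are i.i.d. in {-1, 0, 1}
   with variance p_1 (1 - p_1) + p_2 (1 - p_2) > 0.  Summing tails,
   E J^2 >= sum_(m <= N) P(D_1, ..., D_m all nonzero).  Reversing the first m steps
   maps this event onto {D_m differs from D_0, ..., D_(m-1)}, so the sum is the
   expected number of distinct values visited up to time N, which is at least
   E |D_N| because the walk moves by at most 1 per step.  Finally the pointwise
   bound a^2 y^2 <= a^3 |y| + y^4, applied to the centred walk with a of order
   sqrt N and combined with its second and fourth moments, gives E |D_N| >= c sqrt N. *)

Section FreshValues.
Variable R : realDomainType.
Implicit Types d : nat -> R.

Definition fresh d m := all (fun j => d j != d m) (iota 0 m).

Definition fresh_count d N := \sum_(1 <= m < N.+1) ((fresh d m)%:R : R).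

Lemma fresh_of_gt d N : (forall j, (j <= N)%N -> d j < d N.+1) -> fresh d N.+1.
Proof.
by move=> lt_d; apply/allP => j; rewrite mem_iota => /andP[_ /lt_d/lt_eqF->].
Qed.

Lemma fresh_of_lt d N : (forall j, (j <= N)%N -> d N.+1 < d j) -> fresh d N.+1.
Proof.
by move=> lt_d; apply/allP => j; rewrite mem_iota => /andP[_ /lt_d/gt_eqF->].
Qed.

Lemma range_le_fresh_count d N : (forall k, `|d k.+1 - d k| <= 1) ->
  exists lo hi, (forall j, (j <= N)%N -> lo <= d j <= hi) /\
                hi - lo <= fresh_count d N.
Proof.
move=> d_step; elim: N => [|N [lo [hi [d_in range_le]]]].
  exists (d 0%N), (d 0%N); split; last by rewrite /fresh_count big_geq ?subrr.
  by move=> j; rewrite leqn0 => /eqP->; rewrite lexx.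
have countS : fresh_count d N.+1 = fresh_count d N + (fresh d N.+1)%:R.
  by rewrite /fresh_count big_nat_recr.
have /andP[loN hiN] := d_in N (leqnn N).
have := d_step N; rewrite ler_norml => /andP[stepN stepP].
have d_inS lo' hi' : lo' <= lo -> hi <= hi' -> lo' <= d N.+1 <= hi' ->
    forall j, (j <= N.+1)%N -> lo' <= d j <= hi'.
  move=> lo'_le le_hi' dS j; rewrite leq_eqVlt => /orP[/eqP->//|/d_in/andP[? ?]].
  by apply/andP; split; [apply: le_trans lo'_le _|apply: le_trans le_hi'].
have [hi_lt|] := ltrP hi (d N.+1).
  have freshS : fresh d N.+1.
    by apply: fresh_of_gt => j /d_in/andP[_ /le_lt_trans]; apply.
  exists lo, (d N.+1); split.
    by apply: d_inS; rewrite ?lexx ?(ltW hi_lt) ?andbT //; lra.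
  by rewrite countS freshS /=; lra.
have [lt_lo|] := ltrP (d N.+1) lo.
  have freshS : fresh d N.+1.
    by apply: fresh_of_lt => j /d_in/andP[/(lt_le_trans lt_lo) + _]; apply.
  exists (d N.+1), hi; split.
    by apply: d_inS; rewrite ?lexx ?(ltW lt_lo) //; lra.
  by rewrite countS freshS /=; lra.
move=> le_hi lo_le; exists lo, hi; split; first by apply: d_inS; rewrite ?lexx ?lo_le ?le_hi.
by rewrite countS; have : 0 <= ((fresh d N.+1)%:R : R) by []; lra.
Qed.

Lemma norm_le_fresh_count d N : d 0%N = 0 -> (forall k, `|d k.+1 - d k| <= 1) ->
  `|d N| <= fresh_count d N.
Proof.
move=> d0 /(range_le_fresh_count N) [lo [hi [d_in range_le]]].
have /andP[lo0 hi0] := d_in 0%N (leq0n N); have /andP[loN hiN] := d_in N (leqnn N).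
by rewrite d0 in lo0 hi0; rewrite ler_norml; apply/andP; split; lra.
Qed.
End FreshValues.

Section IidExpectation.
Context {R : realFieldType} {A : eqType} {steps : seq A} {w : A -> R}.
Hypothesis w_ge0 : forall a, 0 <= w a.
Hypothesis w_sum1 : \sum_(a <- steps) w a = 1.
Implicit Types f g : seq A -> R.

Fixpoint expect_iid N f : R :=
  if N is N'.+1 then \sum_(a <- steps) w a * expect_iid N' (fun s => f (a :: s))
  else f [::].

Lemma eq_expect_iid N f g : (forall s, size s = N -> f s = g s) ->
  expect_iid N f = expect_iid N g.
Proof.
elim: N f g => [|N IHN] f g fg /=; first exact: fg.
by apply: eq_bigr => a _; congr (_ * _); apply: IHN => s sN; apply: fg; rewrite /= sN.
Qed.

Lemma ler_expect_iid N f g : (forall s, size s = N -> f s <= g s) ->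
  expect_iid N f <= expect_iid N g.
Proof.
elim: N f g => [|N IHN] f g fg /=; first exact: fg.
apply: ler_sum => a _; apply: ler_wpM2l => //.
by apply: IHN => s sN; apply: fg; rewrite /= sN.
Qed.

Lemma expect_iidD N f g :
  expect_iid N (fun s => f s + g s) = expect_iid N f + expect_iid N g.
Proof.
elim: N f g => [//|N IHN] f g /=.
by rewrite -big_split; apply: eq_bigr => a _; rewrite IHN mulrDr.
Qed.

Lemma expect_iidZ N c f : expect_iid N (fun s => c * f s) = c * expect_iid N f.
Proof.
elim: N f => [//|N IHN] f /=.
by rewrite mulr_sumr; apply: eq_bigr => a _; rewrite IHN mulrCA.
Qed.

Lemma expect_iid_cst N c : expect_iid N (fun _ => c) = c.
Proof.
elim: N => [//|N IHN] /=.
by under eq_bigr do rewrite IHN; rewrite -mulr_suml w_sum1 mul1r.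
Qed.

Lemma expect_iid_sum N (I : Type) (r : seq I) (F : I -> seq A -> R) :
  expect_iid N (fun s => \sum_(i <- r) F i s) = \sum_(i <- r) expect_iid N (F i).
Proof.
elim: r => [|i r IHr]; first by under eq_fun do rewrite big_nil; rewrite expect_iid_cst big_nil.
by rewrite big_cons -IHr -expect_iidD; under eq_fun do rewrite big_cons.
Qed.

Lemma ler_norm_expect_iid N f :
  `|expect_iid N f| <= expect_iid N (fun s => `|f s|).
Proof.
rewrite ler_norml; apply/andP; split; last by apply: ler_expect_iid => s _; exact: ler_norm.
rewrite -mulN1r -expect_iidZ; apply: ler_expect_iid => s _.
by rewrite mulN1r lerNl -normrN ler_norm.
Qed.

Lemma expect_iid_cat M N f :
  expect_iid (M + N) f = expect_iid M (fun u => expect_iid N (fun v => f (u ++ v))).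
Proof. by elim: M f => [//|M IHM] f /=; apply: eq_bigr => a _; rewrite IHM. Qed.

Lemma expect_iid_quartic N (c0 c1 c2 c3 c4 : R) g :
  expect_iid N (fun s => c0 + c1 * g s + c2 * g s ^+ 2 + c3 * g s ^+ 3 + c4 * g s ^+ 4) =
  c0 + c1 * expect_iid N g + c2 * expect_iid N (fun s => g s ^+ 2) +
  c3 * expect_iid N (fun s => g s ^+ 3) + c4 * expect_iid N (fun s => g s ^+ 4).
Proof. by rewrite !expect_iidD !expect_iidZ expect_iid_cst. Qed.

Lemma expect_iid_split N f :
  expect_iid N.+1 f = expect_iid 1 (fun u => expect_iid N (fun v => f (u ++ v))).
Proof. by rewrite -add1n expect_iid_cat. Qed.

Lemma expect_iid_rcons N f :
  expect_iid N.+1 f = expect_iid N (fun u => \sum_(a <- steps) w a * f (rcons u a)).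
Proof.
rewrite -addn1 expect_iid_cat; apply: eq_expect_iid => u _ /=.
by under eq_bigr do rewrite cats1.
Qed.

Lemma expect_iid_rev N f : expect_iid N (fun s => f (rev s)) = expect_iid N f.
Proof.
elim: N f => [//|N IHN] f.
rewrite [RHS]expect_iid_rcons -(IHN (fun u => \sum_(a <- steps) w a * f (rcons u a))).
rewrite expect_iid_sum /=; apply: eq_bigr => a _; rewrite expect_iidZ.
by congr (_ * _); apply: eq_expect_iid => s _; rewrite rev_cons.
Qed.

Lemma expect_iid_rev_take N m f : (m <= N)%N ->
  expect_iid N (fun s => f (rev (take m s) ++ drop m s)) = expect_iid N f.
Proof.
move=> mN; rewrite -(subnKC mN) !expect_iid_cat.
rewrite -(expect_iid_rev _ (fun u => expect_iid (N - m) (fun v => f (u ++ v)))).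
apply: eq_expect_iid => u um; apply: eq_expect_iid => v _.
by rewrite -um take_size_cat // drop_size_cat.
Qed.

Fixpoint words N : seq (seq A) :=
  if N is N'.+1 then [seq a :: s | a <- steps, s <- words N'] else [:: [::]].

Lemma size_words N s : s \in words N -> size s = N.
Proof.
elim: N s => [|N IHN] s /=; first by rewrite inE => /eqP->.
by case/allpairsP => -[a u] /= [_ /IHN uN ->] /=; rewrite uN.
Qed.

Lemma mem_words N s : size s = N -> all (mem steps) s -> s \in words N.
Proof.
elim: N s => [|N IHN] [|a s] //= [sN] /andP[a_in s_in].
by apply/allpairsP; exists (a, s); split => //; apply: IHN.
Qed.

Lemma uniq_words N : uniq steps -> uniq (words N).
Proof.
move=> uniq_steps; elim: N => [//|N IHN] /=.
by apply: allpairs_uniq => // -[a u] [b v] _ _ /= [-> ->].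
Qed.

Lemma expect_iidE N f :
  expect_iid N f = \sum_(s <- words N) f s * \prod_(a <- s) w a.
Proof.
elim: N f => [|N IHN] f /=; first by rewrite big_seq1 big_nil mulr1.
rewrite big_allpairs_dep; apply: eq_bigr => a _.
rewrite IHN mulr_sumr; apply: eq_bigr => s _.
by rewrite big_cons mulrCA mulrA.
Qed.

End IidExpectation.

Arguments expect_iid {R A} steps w N f.
Arguments words {A} steps N.

Section WalkPaths.
Variables (R : realFieldType) (A : Type) (st : A -> R).
Implicit Types s : seq A.

Definition walk s := \sum_(a <- s) st a.

Definition walk_at k s := walk (take k s).

Definition nonzero_upto m s := all (fun k => walk_at k s != 0) (iota 1 m).

Lemma walk_cat u v : walk (u ++ v) = walk u + walk v.
Proof. exact: big_cat. Qed.

Lemma walk_at_rev_take k m s : (k <= m <= size s)%N ->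
  walk_at k (rev (take m s) ++ drop m s) = walk_at m s - walk_at (m - k) s.
Proof.
case/andP=> km ms; have take_m : size (take m s) = m by rewrite size_takel.
rewrite /walk_at takel_cat ?size_rev ?take_m // take_rev take_m /walk big_rev.
rewrite -[in RHS](cat_take_drop (m - k) (take m s)) take_takel ?leq_subr //.
by rewrite big_cat addrC addKr.
Qed.

Lemma nonzero_upto_rev_take m s : (m <= size s)%N ->
  nonzero_upto m (rev (take m s) ++ drop m s) = fresh (walk_at^~ s) m.
Proof.
move=> ms; apply/allP/allP => [nz j|fr k].
  rewrite mem_iota add0n => /andP[_ jm].
  have := nz (m - j)%N; rewrite mem_iota add1n ltnS leq_subr subn_gt0 jm.
  by rewrite walk_at_rev_take ?leq_subr ?ms // subKn ?(ltnW jm) // subr_eq0 eq_sym; apply.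
rewrite mem_iota add1n ltnS => /andP[k1 km].
rewrite walk_at_rev_take ?km ?ms // subr_eq0 eq_sym; apply: fr.
by rewrite mem_iota add0n ltn_subrL k1 (leq_trans k1 km).
Qed.

Hypothesis st_le1 : forall a, `|st a| <= 1.

Lemma walk_at_step k s : `|walk_at k.+1 s - walk_at k s| <= 1.
Proof.
rewrite /walk_at -[take k.+1 s](cat_take_drop k) take_takel // walk_cat addrC addKr.
have : (size (drop k (take k.+1 s)) <= 1)%N.
  by rewrite size_drop size_take_min leq_subLR addn1 geq_minl.
by case: (drop k _) => [|a [|]] //= _; rewrite /walk ?big_nil ?normr0 // big_seq1.
Qed.

Lemma norm_walk_le_fresh_count s :
  `|walk s| <= fresh_count (walk_at^~ s) (size s).
Proof.
rewrite -[in walk s](take_size s); apply: (norm_le_fresh_count (d := walk_at^~ s)).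
  by rewrite /walk_at take0 /walk big_nil.
by move=> k; apply: walk_at_step.
Qed.
End WalkPaths.

Lemma sqr_mul_sqr_le (R : realFieldType) (a y : R) : 0 <= a ->
  a ^+ 2 * y ^+ 2 <= a ^+ 3 * `|y| + y ^+ 4.
Proof.
move=> a_ge0; have -> : y ^+ 4 = (y ^+ 2) ^+ 2 by rewrite -exprM.
rewrite -[y ^+ 2]real_normK ?num_real //; have := normr_ge0 y; set z := `|y| => z_ge0.
have [z_le|a_lt] := lerP z a.
  have : 0 <= a ^+ 2 * z * (a - z) by rewrite !mulr_ge0 ?sqr_ge0 ?subr_ge0.
  have : 0 <= z ^+ 4 by rewrite exprn_ge0.
  nra.
have : 0 <= z ^+ 2 * (z ^+ 2 - a ^+ 2).
  by rewrite mulr_ge0 ?sqr_ge0 // subr_ge0 ler_sqr ?ltW.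
have : 0 <= a ^+ 3 * z by rewrite mulr_ge0 ?exprn_ge0.
nra.
Qed.

Section WalkMoments.
Variables (R : realFieldType) (A : eqType) (steps : seq A) (w st : A -> R).
Hypothesis w_ge0 : forall a, 0 <= w a.
Hypothesis w_sum1 : \sum_(a <- steps) w a = 1.
Hypothesis st_le1 : forall a, `|st a| <= 1.

Local Notation E := (expect_iid steps w).

Lemma expect_norm_walk_le_nonzero_upto N :
  E N (fun s => `|walk st s|) <=
  \sum_(1 <= m < N.+1) E N (fun s => (nonzero_upto st m s)%:R).
Proof.
rewrite big_nat (eq_bigr (fun m => E N (fun s => (fresh (walk_at st^~ s) m)%:R))).
  rewrite -big_nat -expect_iid_sum //; apply: ler_expect_iid => // s sN.
  by rewrite -sN norm_walk_le_fresh_count.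
move=> m /andP[_ mN]; rewrite -(expect_iid_rev_take _ _ (m := m)) //.
by apply: eq_expect_iid => s sN; rewrite nonzero_upto_rev_take ?sN.
Qed.

Definition drift := \sum_(a <- steps) w a * st a.

Definition centered_walk (s : seq A) := \sum_(a <- s) (st a - drift).

Definition variance := E 1 (fun s => centered_walk s ^+ 2).

Definition moment4 := E 1 (fun s => centered_walk s ^+ 4).

Lemma centered_walkE s : centered_walk s = walk st s - (size s)%:R * drift.
Proof. by rewrite /centered_walk sumrB big_const_seq count_predT iter_addr_0 mulr_natl. Qed.

Lemma centered_walk_cat u v : centered_walk (u ++ v) = centered_walk u + centered_walk v.
Proof. exact: big_cat. Qed.

Lemma expect_centered_walk N : E N centered_walk = 0.
Proof.
elim: N => [|N IHN]; first by rewrite /= /centered_walk big_nil.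
rewrite expect_iid_split (eq_expect_iid (g := centered_walk)) => [|u _]; last first.
  under eq_expect_iid do rewrite centered_walk_cat.
  by rewrite expect_iidD // IHN expect_iid_cst // addr0.
rewrite /= /centered_walk; under eq_bigr do rewrite big_seq1 mulrBr.
by rewrite sumrB -mulr_suml w_sum1 mul1r subrr.
Qed.

Lemma expect_centered_walk_sqr N :
  E N (fun s => centered_walk s ^+ 2) = N%:R * variance.
Proof.
elim: N => [|N IHN]; first by rewrite /= /centered_walk big_nil expr0n mul0r.
rewrite expect_iid_split.
rewrite (eq_expect_iid (g := fun u => centered_walk u ^+ 2 + N%:R * variance)) => [|u _].
  by rewrite expect_iidD expect_iid_cst // -/variance -[N.+1%:R]natr1; ring.
under eq_expect_iid do rewrite centered_walk_cat.
rewrite (eq_expect_iid (g := fun v => centered_walk u ^+ 2 + 2 * centered_walk u * centered_walk v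
  + 1 * centered_walk v ^+ 2 + 0 * centered_walk v ^+ 3 + 0 * centered_walk v ^+ 4)) => [|v _].
  by rewrite (expect_iid_quartic w_sum1) expect_centered_walk IHN; ring.
by ring.
Qed.

Lemma expect_centered_walk_4 N : E N (fun s => centered_walk s ^+ 4) =
  N%:R * moment4 + 3 * N%:R * (N%:R - 1) * variance ^+ 2.
Proof.
elim: N => [|N IHN]; first by rewrite /= /centered_walk big_nil; ring.
rewrite expect_iid_split.
rewrite (eq_expect_iid (g := fun u => N%:R * moment4 + 3 * N%:R * (N%:R - 1) * variance ^+ 2
  + 4 * E N (fun s => centered_walk s ^+ 3) * centered_walk u
  + 6 * (N%:R * variance) * centered_walk u ^+ 2 + 0 * centered_walk u ^+ 3
  + 1 * centered_walk u ^+ 4)) => [|u _].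
  rewrite (expect_iid_quartic w_sum1) expect_centered_walk -/variance -/moment4.
  by rewrite -[N.+1%:R]natr1; ring.
under eq_expect_iid do rewrite centered_walk_cat.
rewrite (eq_expect_iid (g := fun v => centered_walk u ^+ 4
  + 4 * centered_walk u ^+ 3 * centered_walk v + 6 * centered_walk u ^+ 2 * centered_walk v ^+ 2
  + 4 * centered_walk u * centered_walk v ^+ 3 + 1 * centered_walk v ^+ 4)) => [|v _].
  by rewrite (expect_iid_quartic w_sum1) expect_centered_walk IHN expect_centered_walk_sqr; ring.
by ring.
Qed.

Lemma norm_drift_le1 : `|drift| <= 1.
Proof.
rewrite -w_sum1; apply: le_trans (ler_norm_sum _ _ _) _; apply: ler_sum => a _.
by rewrite normrM ger0_norm // ler_piMr.
Qed.

Lemma norm_centered_walk1_le2 s : size s = 1%N -> `|centered_walk s| <= 2.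
Proof.
case: s => [|a []] //= _; rewrite /centered_walk big_seq1.
by apply: le_trans (ler_normB _ _) _; have := st_le1 a; have := norm_drift_le1; lra.
Qed.

Lemma variance_ge0 : 0 <= variance.
Proof.
by rewrite -(expect_iid_cst w_sum1 1 0); apply: ler_expect_iid => // s _; exact: sqr_ge0.
Qed.

Lemma variance_le4 : variance <= 4.
Proof.
rewrite -(expect_iid_cst w_sum1 1 4); apply: ler_expect_iid => // s /norm_centered_walk1_le2.
rewrite -real_normK ?num_real //; have := normr_ge0 (centered_walk s); nra.
Qed.

Lemma moment4_le16 : moment4 <= 16.
Proof.
rewrite -(expect_iid_cst w_sum1 1 16); apply: ler_expect_iid => // s /norm_centered_walk1_le2.
have -> : centered_walk s ^+ 4 = (`|centered_walk s| ^+ 2) ^+ 2.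
  by rewrite real_normK ?num_real // -exprM.
have := normr_ge0 (centered_walk s); set z := `|_| => z_ge0 z_le2.
have : z ^+ 2 <= 4 by nra.
have := sqr_ge0 z; nra.
Qed.

Lemma expect_walk N : E N (walk st) = N%:R * drift.
Proof.
rewrite (eq_expect_iid (g := fun s => centered_walk s + N%:R * drift)) => [|s sN].
  by rewrite expect_iidD expect_centered_walk expect_iid_cst // add0r.
by rewrite centered_walkE sN subrK.
Qed.

Lemma expect_norm_centered_walk_le N :
  E N (fun s => `|centered_walk s|) <= 2 * E N (fun s => `|walk st s|).
Proof.
apply: le_trans (_ : E N (fun s => `|walk st s| + `|N%:R * drift|) <= _).
  by apply: ler_expect_iid => // s sN; rewrite centered_walkE sN ler_normB.
rewrite expect_iidD expect_iid_cst // -expect_walk.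
by have := ler_norm_expect_iid (steps := steps) w_ge0 N (walk st); lra.
Qed.

Lemma expect_norm_centered_walk_ge n : (0 < n)%N ->
  n%:R * variance - 4 <= 16 * E (n * n) (fun s => `|centered_walk s|).
Proof.
move=> n_gt0; set EY := E _ _; set x : R := n%:R.
(* sqr_mul_sqr_le with a = 4 n over N = n^2 steps: E Y^2 = n^2 variance while
   E Y^4 = O(n^4), so the term a^3 E|Y| must be of order n^4. *)
have x_ge1 : 1 <= x by rewrite ler1n.
have key : E (n * n) (fun s => (4 * x) ^+ 2 * centered_walk s ^+ 2) <=
           E (n * n) (fun s => (4 * x) ^+ 3 * `|centered_walk s| + centered_walk s ^+ 4).
  by apply: ler_expect_iid => // s _; apply: sqr_mul_sqr_le; lra.
rewrite expect_iidZ expect_iidD expect_iidZ expect_centered_walk_sqr in key.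
rewrite expect_centered_walk_4 -/EY natrM -/x in key.
have x_ge0 : 0 <= x by lra.
have m4_term : x ^+ 2 * moment4 <= 16 * x ^+ 3.
  have : 0 <= x ^+ 2 * (16 - moment4) by rewrite mulr_ge0 ?sqr_ge0 ?subr_ge0 ?moment4_le16.
  have : 0 <= x ^+ 2 * (x - 1) by rewrite mulr_ge0 ?sqr_ge0 ?subr_ge0.
  lra.
have var_term : 3 * x ^+ 2 * (x ^+ 2 - 1) * variance ^+ 2 <= 12 * x ^+ 4 * variance.
  have : 0 <= x ^+ 2 * (x ^+ 2 - 1) * (variance * (4 - variance)).
    rewrite !mulr_ge0 ?sqr_ge0 ?variance_ge0 ?subr_ge0 ?variance_le4 //.
    exact: exprn_ege1.
  have : 0 <= x ^+ 2 * variance by rewrite mulr_ge0 ?sqr_ge0 ?variance_ge0.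
  lra.
have x3_gt0 : 0 < x ^+ 3 by rewrite exprn_gt0 //; lra.
by rewrite -(ler_pM2l x3_gt0); lra.
Qed.

Lemma sum_expect_nonzero_upto_ge n : (0 < n)%N ->
  n%:R * variance - 4 <=
  32 * \sum_(1 <= m < (n * n).+1) E (n * n) (fun s => (nonzero_upto st m s)%:R).
Proof.
move=> n_gt0; have := expect_norm_walk_le_nonzero_upto (n * n).
have := expect_norm_centered_walk_ge n_gt0; have := expect_norm_centered_walk_le (n * n).
lra.
Qed.

End WalkMoments.

Lemma sum_ltn_le_minn N n : (\sum_(m < N) (m < n) <= minn N n)%N.
Proof.
elim: N => [|N IHN]; first by rewrite big_ord0.
rewrite big_ord_recr /=; move: IHN; set S := bigop _ _ _.
by case: ltnP => /= N_n; lia.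
Qed.

Section IntegralLowerBound.
Context d (T : measurableType d) (R : realType) (mu : {measure set T -> \bar R}).
Import HBNNSimple.

(* No measurability of f is needed: the integral of a nonnegative function is a
   supremum over the simple functions below it. *)
Lemma sum_measure_le_integral n (F : nat -> set T) (f : T -> \bar R) :
  (forall i, measurable (F i)) -> (forall t, 0 <= f t)%E ->
  (forall t, ((\sum_(i < n) \1_(F i) t)%:E <= f t)%E) ->
  (\sum_(i < n) mu (F i) <= \int[mu]_t f t)%E.
Proof.
move=> mF f_ge0 le_f; pose h := sum_nnsfun (fun i => indic_nnsfun R (mF i)) n.
rewrite ge0_integralTE //; apply: (@le_trans _ _ (sintegral mu h)); last first.
  by apply: ereal_sup_ubound; exists h => // t; rewrite sum_nnsfunE; exact: le_f.
rewrite -integralT_nnsfun; under eq_integral => t _ do rewrite sum_nnsfunE -sumEFin.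
rewrite ge0_integral_sum //; last 2 first.
- by move=> i; apply/measurable_EFinP; exact: measurable_indic.
- by move=> i t _; rewrite lee_fin.
by apply: lee_sum => i _; rewrite integral_indic // setIT.
Qed.
End IntegralLowerBound.

Definition bool_law (R : pzRingType) (q : R) (b : bool) := if b then q else 1 - q.

Definition bool_pairs : seq (bool * bool) :=
  [:: (true, true); (true, false); (false, true); (false, false)].

Lemma rencontre_time_ge0 (R : realType) d T (X : 'I_d -> nat -> T -> bool) t :
  (0 <= rencontre_time R X t)%E.
Proof. by apply: le_ereal_inf_tmp => _ [n _ <-]; rewrite lee_fin ler0n. Qed.

Section PairOfSequences.
Variables (R : realType) (d0 : measure_display) (T : measurableType d0)
  (P : probability T R) (d : nat) (p : 'I_d -> R) (X : 'I_d -> nat -> T -> bool).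
Hypothesis p_range : forall j, 0 < p j < 1.
Hypothesis mX : forall j k, measurable [set t | X j k t].
Hypothesis PX : forall j k, P [set t | X j k t] = (p j)%:E.
Hypothesis X_indep : mutually_independent_bool P (fun jk : 'I_d * nat => X jk.1 jk.2).
Variables j1 j2 : 'I_d.
Hypothesis j12 : j1 != j2.

Definition pair_step (a : bool * bool) : R := (a.1 : nat)%:R - (a.2 : nat)%:R.

Definition pair_law (a : bool * bool) := bool_law (p j1) a.1 * bool_law (p j2) a.2.

Definition pair_path N t := [seq (X j1 i t, X j2 i t) | i <- iota 0 N].

Lemma size_pair_path N t : size (pair_path N t) = N.
Proof. by rewrite size_map size_iota. Qed.

Lemma nth_pair_path N t k : (k < N)%N ->
  nth (true, true) (pair_path N t) k = (X j1 k t, X j2 k t).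
Proof. by move=> kN; rewrite (nth_map 0%N) ?size_iota // nth_iota. Qed.

Lemma X_eq_complement j k : [set t | X j k t = false] = ~` [set t | X j k t].
Proof. by apply/seteqP; split => t /=; case: (X j k t). Qed.

Lemma measurable_X_eq j k b : measurable [set t | X j k t = b].
Proof. by case: b; [exact: mX | rewrite X_eq_complement; exact: measurableC]. Qed.

Lemma prob_X_eq j k b : P [set t | X j k t = b] = (bool_law (p j) b)%:E.
Proof. by case: b; [exact: PX | rewrite X_eq_complement probability_setC // PX EFinB]. Qed.

Definition pair_coords N := [seq (j1, i) | i <- iota 0 N] ++ [seq (j2, i) | i <- iota 0 N].

Definition coord_value (s : seq (bool * bool)) (jk : 'I_d * nat) :=
  if jk.1 == j1 then (nth (true, true) s jk.2).1 else (nth (true, true) s jk.2).2.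

Lemma uniq_pair_coords N : uniq (pair_coords N).
Proof.
rewrite cat_uniq !map_inj_uniq ?iota_uniq //= ?andbT; try by move=> x y [].
apply/hasPn => _ /mapP [i _ ->]; apply/mapP => -[k _ [j21 _]].
by move: j12; rewrite j21 eqxx.
Qed.

Lemma pair_path_atomE N s : size s = N -> [set t | pair_path N t = s] =
  \bigcap_(jk in [set jk | jk \in pair_coords N]) [set t | X jk.1 jk.2 t = coord_value s jk].
Proof.
have j21 : (j2 == j1) = false by rewrite eq_sym (negbTE j12).
move=> sN; apply/seteqP; split => t /=.
  move=> <- [j i]; rewrite /= mem_cat => /orP[] /mapP [k + [-> ->]];
    by rewrite mem_iota add0n => kN; rewrite /coord_value /= ?eqxx ?j21 nth_pair_path.
move=> Xt; apply: (@eq_from_nth _ (true, true)); rewrite size_pair_path ?sN // => i iN.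
have := Xt (j1, i); have := Xt (j2, i); rewrite /coord_value /= eqxx j21 nth_pair_path //.
rewrite /pair_coords !mem_cat !map_f ?orbT ?mem_iota //.
by case: (nth _ s i) => /= ? ? -> // ->.
Qed.

Lemma prob_pair_path_atom N s : size s = N ->
  P [set t | pair_path N t = s] = (\prod_(a <- s) pair_law a)%:E.
Proof.
move=> sN; rewrite pair_path_atomE // X_indep ?uniq_pair_coords // big_cat !big_map /=.
under eq_bigr do rewrite /coord_value /= eqxx prob_X_eq.
under [X in (_ * X)%E]eq_bigr do rewrite /coord_value /= eq_sym (negbTE j12) prob_X_eq.
rewrite !prodEFin -EFinM -big_split /= (big_nth (true, true)) sN.
by rewrite /index_iota subn0.
Qed.

Lemma measurable_pair_path_atom N s : measurable [set t | pair_path N t = s].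
Proof.
have [sN|sN] := eqVneq (size s) N.
  by rewrite pair_path_atomE //; apply: fin_bigcap_measurable => // jk _; exact: measurable_X_eq.
suff -> : [set t | pair_path N t = s] = set0 by exact: measurable0.
by apply/seteqP; split => t //= pt; move: sN; rewrite -pt size_pair_path eqxx.
Qed.

Lemma pair_path_eventE N (Q : pred (seq (bool * bool))) :
  [set t | Q (pair_path N t)] =
  \bigcup_(s in [set` [seq s <- words bool_pairs N | Q s]]) [set t | pair_path N t = s].
Proof.
apply/seteqP; split => [t Qt|t [s + /= ps]]; last by rewrite /= -ps mem_filter => /andP[].
exists (pair_path N t) => //=; rewrite mem_filter Qt mem_words ?size_pair_path //.
by apply/allP => -[[] []].
Qed.

Lemma measurable_pair_path_event N (Q : pred (seq (bool * bool))) :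
  measurable [set t | Q (pair_path N t)].
Proof.
rewrite pair_path_eventE; apply: fin_bigcup_measurable => // s _.
exact: measurable_pair_path_atom.
Qed.

Lemma prob_pair_path_event N (Q : pred (seq (bool * bool))) :
  P [set t | Q (pair_path N t)] = (expect_iid bool_pairs pair_law N (fun s => (Q s)%:R))%:E.
Proof.
rewrite pair_path_eventE measure_fin_bigcup //; last 3 first.
- exact: finite_seq.
- by move=> s s' _ _ [t [/= <- <-]].
- by move=> s _; exact: measurable_pair_path_atom.
rewrite -fsbig_seq ?filter_uniq ?uniq_words // big_filter big_seq_cond.
rewrite (eq_bigr (fun s => (\prod_(a <- s) pair_law a)%:E)); last first.
  by move=> s /andP[/size_words sN _]; exact: prob_pair_path_atom.
rewrite -big_seq_cond sumEFin expect_iidE big_mkcond /=; congr EFin.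
by apply: eq_bigr => s _; case: (Q s); rewrite ?mul1r ?mul0r.
Qed.

Lemma walk_at_pair_path N k t : (k <= N)%N ->
  walk_at pair_step k (pair_path N t) =
  (partial_sum X j1 k t)%:R - (partial_sum X j2 k t)%:R :> R.
Proof.
move=> kN; rewrite /walk_at -map_take take_iota (minn_idPl kN) /walk big_map.
have -> : iota 0 k = index_iota 0 k by rewrite /index_iota subn0.
by rewrite big_mkord /partial_sum !natr_sum -sumrB.
Qed.

Definition no_meeting_upto N m := [set t | nonzero_upto pair_step m (pair_path N t)].

Lemma sum_indic_no_meeting_le_rencontre_time N t :
  ((\sum_(m < N) \1_(no_meeting_upto N m.+1) t)%:E <= rencontre_time R X t)%E.
Proof.
apply: le_ereal_inf_tmp => _ [n [n_gt0 meet_n] <-]; rewrite lee_fin.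
apply: le_trans (_ : \sum_(m < N) ((m < n)%N)%:R <= _).
  apply: ler_sum => m _; rewrite indicE; case: ltnP => [_|n_le]; first by case: (_ \in _).
  suff /negbTE-> : t \notin no_meeting_upto N m.+1 by [].
  apply/negP => /set_mem /allP /(_ n); rewrite mem_iota n_gt0 add1n ltnS => /(_ (leqW n_le)).
  by rewrite walk_at_pair_path ?(leq_trans n_le (ltnW (ltn_ord m))) // (meet_n j1 j2) subrr eqxx.
by rewrite -natr_sum ler_nat (leq_trans (sum_ltn_le_minn N n)) ?geq_minr.
Qed.

Lemma sum_expect_nonzero_upto_le_integral N :
  ((\sum_(1 <= m < N.+1)
      expect_iid bool_pairs pair_law N (fun s => (nonzero_upto pair_step m s)%:R))%:E <=
   \int[P]_t rencontre_time R X t)%E.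
Proof.
rewrite big_add1 big_mkord -sumEFin.
under eq_bigr => m _ do rewrite -(prob_pair_path_event N (nonzero_upto pair_step m.+1)).
apply: (sum_measure_le_integral P (F := fun m => no_meeting_upto N m.+1)) => [m|t|t].
- exact: measurable_pair_path_event.
- exact: rencontre_time_ge0.
- exact: sum_indic_no_meeting_le_rencontre_time.
Qed.

Lemma pair_law_ge0 a : 0 <= pair_law a.
Proof.
have /andP[? ?] := p_range j1; have /andP[? ?] := p_range j2.
by case: a => [[] []]; apply: mulr_ge0 => /=; lra.
Qed.

Lemma pair_law_sum1 : \sum_(a <- bool_pairs) pair_law a = 1.
Proof. by rewrite !big_cons big_nil /pair_law /=; ring. Qed.

Lemma pair_step_le1 a : `|pair_step a| <= 1.
Proof.
by case: a => [[] []]; rewrite /pair_step /= ?subrr ?subr0 ?sub0r ?normrN ?normr1 ?normr0.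
Qed.

Lemma pair_variance_gt0 : 0 < variance bool_pairs pair_law pair_step.
Proof.
have -> : variance bool_pairs pair_law pair_step =
    p j1 * (1 - p j1) + p j2 * (1 - p j2).
  by rewrite /variance /= /centered_walk /drift !big_cons !big_nil /pair_law /pair_step /=; ring.
have /andP[? ?] := p_range j1; have /andP[? ?] := p_range j2.
by apply: addr_gt0; apply: mulr_gt0; lra.
Qed.

Lemma integral_rencontre_time_pair : (\int[P]_t rencontre_time R X t = +oo)%E.
Proof.
apply/eqyP => M M_gt0; have := pair_variance_gt0.
set var := variance _ _ _ => var_gt0.
pose n := (Num.truncn ((32 * M + 4) / var)).+1.
have n_large : (32 * M + 4) / var < n%:R by exact: truncnS_gt.
apply: le_trans (sum_expect_nonzero_upto_le_integral (n * n)); rewrite lee_fin.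
have n_gt0 : (0 < n)%N by [].
have := sum_expect_nonzero_upto_ge pair_law_ge0 pair_law_sum1 pair_step_le1 n_gt0.
by rewrite -/var; move: n_large; rewrite ltr_pdivrMr //; lra.
Qed.

End PairOfSequences.

Theorem theorem10 (R : realType) (d0 : measure_display) (T : measurableType d0)
  (P : probability T R) (d : nat) (p : 'I_d -> R)
  (X : 'I_d -> nat -> T -> bool) :
  (3 <= d)%N ->
  (forall j, 0 < p j < 1) ->
  (forall j k, measurable [set t | X j k t]) ->
  (forall j k, P [set t | X j k t] = (p j)%:E) ->
  mutually_independent_bool P (fun jk : 'I_d * nat => X jk.1 jk.2) ->
  (\int[P]_t rencontre_time R X t = +oo)%E.
Proof.
move=> d_ge3 p_range mX PX X_indep.
have d_gt0 : (0 < d)%N by apply: leq_trans d_ge3.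
have d_gt1 : (1 < d)%N by apply: leq_trans d_ge3.
have j01 : Ordinal d_gt0 != Ordinal d_gt1 :> 'I_d by [].
exact: (integral_rencontre_time_pair p_range mX PX X_indep j01).
Qed.
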